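(* Let $H=\langle a,b,c\mid ac=ca,\ bc=cb,\ [a,b]=c\rangle$ be the integral Heisenberg group, identified with the group of matrices $\begin{bmatrix}1&x&z\\ &1&y\\ &&1\end{bmatrix}$ with $x,y,z\in\mathbb{Z}$. Let $L:H\rightarrow\mathbb{R}$ be a semi-norm, i.e. $L(gh)\le L(g)+L(h)$ and $L(g)=L(g^{-1})$ for any $g,h\in H$, and let $\mathrm{sL}(g)=\lim_{n\to\infty}\frac{L(g^n)}{n}$ be its stable norm. There exists a constant $K$ such that \[ \mathrm{sL}(g)\le K(|x|+|y|) \] for any $g=\begin{bmatrix}1&x&z\\ &1&y\\ &&1\end{bmatrix}\in H$.
   Context: One may take $K=\max\{L(s):s\in S\}$ with $S=\{a,b,a^{-1},b^{-1}\}$; the proof uses that the stable word length with respect to $S$ of such $g$ equals $|x|+|y|$. *)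

From Stdlib Require Import Reals ZArith Lra.
From Coquelicot Require Import Coquelicot.
Open Scope R_scope.

(* The integral Heisenberg group, as upper unitriangular integer matrices
   [[1,x,z],[0,1,y],[0,0,1]] encoded by the triple (x,y,z). *)
Record heis := Heis { hx : Z; hy : Z; hz : Z }.

(* matrix product:  (x,y,z)(x',y',z') = (x+x', y+y', z+z'+x*y') *)
Definition hmul (g h : heis) : heis :=
  Heis (hx g + hx h)%Z (hy g + hy h)%Z (hz g + hz h + hx g * hy h)%Z.

Definition hone : heis := Heis 0 0 0.

Definition hinv (g : heis) : heis :=
  Heis (- hx g)%Z (- hy g)%Z (hx g * hy g - hz g)%Z.

Fixpoint hpow (g : heis) (n : nat) : heis :=
  match n with
  | O => hone
  | S m => hmul g (hpow g m)
  end.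

Definition seminorm (L : heis -> R) : Prop :=
  (forall g h, L (hmul g h) <= L g + L h) /\ (forall g, L g = L (hinv g)).

Definition stable_norm (L : heis -> R) (g : heis) : R :=
  real (Lim_seq (fun n => L (hpow g n) / INR n)).

From Stdlib Require Import Reals ZArith Lra Lia.
From Coquelicot Require Import Coquelicot.
Open Scope R_scope.

(* With a = (1,0,0), b = (0,1,0) and the central c = (0,0,1), write g = (x,y,z)
   as g = h c^z with h = (x,y,0), so that g^n = h^n c^(n z).  The length of h^n
   grows at most linearly, with slope |x| L(a) + |y| L(b).  A central element
   c^w with w >= 0 is the product of the commutator [a^m, b^m] = c^(m^2) and c^r,
   where m = floor(sqrt w) and r <= 2m, so L(c^w) = O(sqrt |w|), and this term
   disappears from the stable norm. *)

Lemma hmul_hone_r (g : heis) : hmul g hone = g.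
Proof. destruct g as [x y z]; unfold hmul; cbn; f_equal; ring. Qed.

Lemma hpow_Heis_of_mul_eq0 (x y z : Z) (n : nat) : (x * y = 0)%Z ->
  hpow (Heis x y z) n = Heis (Z.of_nat n * x) (Z.of_nat n * y) (Z.of_nat n * z).
Proof.
  intros Hxy; induction n as [|n IH]; [reflexivity|].
  cbn [hpow]; rewrite IH; unfold hmul; cbn [hx hy hz]; f_equal; nia.
Qed.

Lemma hpow_Heis_split (x y z : Z) (n : nat) :
  hpow (Heis x y z) n = hmul (hpow (Heis x y 0) n) (Heis 0 0 (Z.of_nat n * z)).
Proof.
  induction n as [|n IH]; [reflexivity|].
  cbn [hpow]; rewrite IH; destruct (hpow (Heis x y 0) n) as [a b c].
  unfold hmul; cbn [hx hy hz]; f_equal; nia.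
Qed.

Lemma real_Lim_seq_div_INR_le (u : nat -> R) (a b c : R) : 0 <= b ->
  (forall n, u n <= a + b * INR n + c * sqrt (INR n)) ->
  real (Lim_seq (fun n => u n / INR n)) <= b.
Proof.
  intros Hb Hu.
  assert (Hinv : is_lim_seq (fun n => / INR n) 0).
  { apply (is_lim_seq_inv _ p_infty); [exact is_lim_seq_INR | discriminate]. }
  assert (Hinv_sqrt : is_lim_seq (fun n => / sqrt (INR n)) 0).
  { apply (is_lim_seq_inv _ p_infty); [|discriminate].
    eapply filterlim_comp; [exact is_lim_seq_INR | exact filterlim_sqrt_p]. }
  assert (Hlim : Lim_seq (fun n => b + a * / INR n + c * / sqrt (INR n)) = b).
  { apply is_lim_seq_unique.
    replace (Finite b) with (Finite (b + a * 0 + c * 0)) by (f_equal; ring).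
    apply is_lim_seq_plus'; [apply is_lim_seq_plus'|];
      [apply is_lim_seq_const | apply is_lim_seq_mult'; [apply is_lim_seq_const|] ..];
      assumption. }
  assert (Hle : Rbar_le (Lim_seq (fun n => u n / INR n)) b).
  { rewrite <- Hlim; apply Lim_seq_le_loc; exists 1%nat; intros n Hn.
    assert (Hn0 : 0 < INR n) by (apply lt_0_INR; lia).
    assert (Hsqrt0 : 0 < sqrt (INR n)) by (apply sqrt_lt_R0; lra).
    assert (Hsqrt : / sqrt (INR n) * INR n = sqrt (INR n)).
    { rewrite <- (sqrt_sqrt (INR n)) at 2 by lra; field; lra. }
    apply Rmult_le_reg_r with (INR n); [exact Hn0|].
    replace (u n / INR n * INR n) with (u n) by (field; lra).
    replace ((b + a * / INR n + c * / sqrt (INR n)) * INR n)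
      with (a + b * INR n + c * (/ sqrt (INR n) * INR n)) by (field; lra).
    rewrite Hsqrt; apply Hu. }
  destruct (Lim_seq (fun n => u n / INR n)); simpl in *; [exact Hle | contradiction | exact Hb].
Qed.

Section Seminorm.

Variable L : heis -> R.
Hypothesis L_mul : forall g h, L (hmul g h) <= L g + L h.
Hypothesis L_inv : forall g, L g = L (hinv g).

Lemma L_nonneg (g : heis) : 0 <= L g.
Proof.
  assert (Hone : L hone <= L hone + L hone)
    by (rewrite <- (hmul_hone_r hone) at 1; apply L_mul).
  assert (Hg : hmul g (hinv g) = hone)
    by (destruct g; unfold hmul, hinv, hone; cbn; f_equal; ring).
  pose proof (L_mul g (hinv g)) as Hgg; rewrite Hg, <- L_inv in Hgg; lra.
Qed.

Lemma L_hpow_le (g : heis) (n : nat) : (0 < n)%nat -> L (hpow g n) <= INR n * L g.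
Proof.
  destruct n as [|n]; [lia|intros _].
  induction n as [|n IH].
  - cbn [hpow]; rewrite hmul_hone_r; simpl; lra.
  - change (hpow g (S (S n))) with (hmul g (hpow g (S n))).
    rewrite (S_INR (S n)); pose proof (L_mul g (hpow g (S n))); lra.
Qed.

Lemma L_line_le (x y z k : Z) : (x * y = 0)%Z -> k <> 0%Z ->
  L (Heis (k * x) (k * y) (k * z)) <= IZR (Z.abs k) * L (Heis x y z).
Proof.
  intros Hxy Hk.
  assert (Hpos : forall x y z k, (x * y = 0)%Z -> (0 < k)%Z ->
            L (Heis (k * x) (k * y) (k * z)) <= IZR (Z.abs k) * L (Heis x y z)).
  { clear x y z k Hxy Hk; intros x y z k Hxy Hk.
    rewrite Z.abs_eq, <- (Z2Nat.id k), <- INR_IZR_INZ, <- hpow_Heis_of_mul_eq0 by lia.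
    apply L_hpow_le; lia. }
  destruct (Z_lt_le_dec k 0) as [Hneg|Hnonneg]; [|apply Hpos; lia].
  replace (Heis (k * x) (k * y) (k * z)) with (Heis (- k * - x) (- k * - y) (- k * - z))
    by (f_equal; ring).
  replace (L (Heis x y z)) with (L (Heis (- x) (- y) (- z)))
    by (rewrite L_inv; unfold hinv; cbn; do 2 f_equal; lia).
  rewrite <- Z.abs_opp; apply Hpos; lia.
Qed.

(* A semi-norm need not vanish at the identity, hence the [L hone] term. *)
Lemma L_line_hone_le (x y z k : Z) : (x * y = 0)%Z ->
  L (Heis (k * x) (k * y) (k * z)) <= L hone + IZR (Z.abs k) * L (Heis x y z).
Proof.
  intros Hxy; pose proof (L_nonneg hone); pose proof (L_nonneg (Heis x y z)).
  destruct (Z.eq_dec k 0) as [->|Hk].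
  - change (Heis (0 * x) (0 * y) (0 * z)) with hone; simpl; lra.
  - pose proof (L_line_le x y z k Hxy Hk); lra.
Qed.

Lemma L_Heis_xy0_le (x y : Z) : (x <> 0 \/ y <> 0)%Z ->
  L (Heis x y 0) <= IZR (Z.abs x) * L (Heis 1 0 0) + IZR (Z.abs y) * L (Heis 0 1 0).
Proof.
  intros Hxy.
  pose proof (L_line_le 1 0 0 x eq_refl) as Ha; pose proof (L_line_le 0 1 0 y eq_refl) as Hb.
  rewrite !Z.mul_1_r, !Z.mul_0_r in Ha, Hb.
  destruct (Z.eq_dec x 0) as [->|Hx]; destruct (Z.eq_dec y 0) as [->|Hy].
  - lia.
  - simpl Z.abs; specialize (Hb Hy); lra.
  - simpl Z.abs; specialize (Ha Hx); lra.
  - replace (Heis x y 0) with (hmul (Heis 0 y 0) (Heis x 0 0)) by (unfold hmul; cbn; f_equal; ring).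
    pose proof (L_mul (Heis 0 y 0) (Heis x 0 0)); specialize (Ha Hx); specialize (Hb Hy); lra.
Qed.

Lemma L_hpow_Heis_xy0_le (x y : Z) (n : nat) :
  L (hpow (Heis x y 0) n)
  <= L hone + INR n * (IZR (Z.abs x) * L (Heis 1 0 0) + IZR (Z.abs y) * L (Heis 0 1 0)).
Proof.
  set (b := IZR (Z.abs x) * L (Heis 1 0 0) + IZR (Z.abs y) * L (Heis 0 1 0)).
  assert (Hb : 0 <= b).
  { pose proof (L_nonneg (Heis 1 0 0)); pose proof (L_nonneg (Heis 0 1 0)).
    assert (0 <= IZR (Z.abs x) /\ 0 <= IZR (Z.abs y)) by (split; apply IZR_le; lia).
    unfold b; nra. }
  pose proof (L_nonneg hone); pose proof (pos_INR n).
  destruct n as [|n]; [simpl; lra|].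
  assert (Hxy : (x = 0 /\ y = 0 \/ (x <> 0 \/ y <> 0))%Z) by lia.
  destruct Hxy as [[-> ->]|Hxy].
  - rewrite hpow_Heis_of_mul_eq0, !Z.mul_0_r by reflexivity.
    change (Heis 0 0 0) with hone; nra.
  - pose proof (L_hpow_le (Heis x y 0) (S n) ltac:(lia)).
    pose proof (Rmult_le_compat_l (INR (S n)) _ _ (pos_INR (S n)) (L_Heis_xy0_le x y Hxy))
      as Hh.
    fold b in Hh; lra.
Qed.

Lemma L_central_nonneg_le (w : Z) : (0 <= w)%Z ->
  L (Heis 0 0 w)
  <= 5 * L hone + 2 * (L (Heis 1 0 0) + L (Heis 0 1 0) + L (Heis 0 0 1)) * sqrt (IZR w).
Proof.
  intros Hw; destruct (Z.sqrt_spec w Hw) as [Hm_le Hm_gt].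
  pose proof (Z.sqrt_nonneg w) as Hm0.
  set (m := Z.sqrt w) in *; set (r := (w - m * m)%Z).
  assert (Hr : (0 <= r <= 2 * m)%Z) by (unfold r, Z.succ in *; nia).
  assert (Hm_sqrt : IZR m <= sqrt (IZR w)).
  { rewrite <- (sqrt_square (IZR m)) by (apply IZR_le; lia).
    apply sqrt_le_1_alt; rewrite <- mult_IZR; apply IZR_le; lia. }
  assert (Hfactor : Heis 0 0 w = hmul (hmul (hmul (hmul (Heis m 0 0) (Heis 0 m 0))
                                  (Heis (- m) 0 0)) (Heis 0 (- m) 0)) (Heis 0 0 r)).
  { unfold hmul, r; cbn; f_equal; ring. }
  rewrite Hfactor.
  pose proof (L_mul (hmul (hmul (hmul (Heis m 0 0) (Heis 0 m 0)) (Heis (- m) 0 0))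
                          (Heis 0 (- m) 0)) (Heis 0 0 r)).
  pose proof (L_mul (hmul (hmul (Heis m 0 0) (Heis 0 m 0)) (Heis (- m) 0 0)) (Heis 0 (- m) 0)).
  pose proof (L_mul (hmul (Heis m 0 0) (Heis 0 m 0)) (Heis (- m) 0 0)).
  pose proof (L_mul (Heis m 0 0) (Heis 0 m 0)).
  pose proof (L_line_hone_le 1 0 0 m eq_refl); pose proof (L_line_hone_le 1 0 0 (- m) eq_refl).
  pose proof (L_line_hone_le 0 1 0 m eq_refl); pose proof (L_line_hone_le 0 1 0 (- m) eq_refl).
  pose proof (L_line_hone_le 0 0 1 r eq_refl).
  rewrite !Z.mul_1_r, !Z.mul_0_r, !Z.abs_opp, !Z.abs_eq in * by lia.
  assert (IZR r <= 2 * IZR m) by (rewrite <- mult_IZR; apply IZR_le; lia).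
  pose proof (L_nonneg (Heis 1 0 0)); pose proof (L_nonneg (Heis 0 1 0));
    pose proof (L_nonneg (Heis 0 0 1)).
  nra.
Qed.

Lemma L_central_le (w : Z) :
  L (Heis 0 0 w)
  <= 5 * L hone
     + 2 * (L (Heis 1 0 0) + L (Heis 0 1 0) + L (Heis 0 0 1)) * sqrt (IZR (Z.abs w)).
Proof.
  destruct (Z.le_gt_cases 0 w).
  - rewrite Z.abs_eq by lia; now apply L_central_nonneg_le.
  - rewrite L_inv; replace (hinv (Heis 0 0 w)) with (Heis 0 0 (Z.abs w))
      by (unfold hinv; cbn; f_equal; lia).
    apply L_central_nonneg_le; lia.
Qed.

Lemma L_hpow_Heis_le (x y z : Z) (n : nat) :
  L (hpow (Heis x y z) n)
  <= 6 * L hone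
     + (IZR (Z.abs x) * L (Heis 1 0 0) + IZR (Z.abs y) * L (Heis 0 1 0)) * INR n
     + 2 * (L (Heis 1 0 0) + L (Heis 0 1 0) + L (Heis 0 0 1)) * sqrt (IZR (Z.abs z))
       * sqrt (INR n).
Proof.
  rewrite hpow_Heis_split.
  pose proof (L_mul (hpow (Heis x y 0) n) (Heis 0 0 (Z.of_nat n * z))).
  pose proof (L_hpow_Heis_xy0_le x y n).
  pose proof (L_central_le (Z.of_nat n * z)).
  rewrite Z.abs_mul, Z.abs_eq, mult_IZR, <- INR_IZR_INZ, sqrt_mult_alt in *
    by (auto using pos_INR; lia).
  lra.
Qed.

End Seminorm.

Theorem corollary24 (L : heis -> R) (hL : seminorm L) :
  exists K : R, forall x y z : Z,
    stable_norm L (Heis x y z) <= K * (IZR (Z.abs x) + IZR (Z.abs y)).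
Proof.
  destruct hL as [L_mul L_inv].
  exists (Rmax (L (Heis 1 0 0)) (L (Heis 0 1 0))); intros x y z.
  assert (Habs : 0 <= IZR (Z.abs x) /\ 0 <= IZR (Z.abs y)) by (split; apply IZR_le; lia).
  pose proof (L_nonneg L L_mul L_inv (Heis 1 0 0)).
  pose proof (L_nonneg L L_mul L_inv (Heis 0 1 0)).
  eapply Rle_trans.
  - eapply real_Lim_seq_div_INR_le; [|exact (L_hpow_Heis_le L L_mul L_inv x y z)]; nra.
  - pose proof (Rmax_l (L (Heis 1 0 0)) (L (Heis 0 1 0)));
      pose proof (Rmax_r (L (Heis 1 0 0)) (L (Heis 0 1 0))); nra.
Qed.
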